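(* Let $S$ be an intra-regular semigroup. Then Green's relation $\mathcal{J}$ equals the relation $\mathcal{I}$ on $S$.
   Context: A semigroup $S$ is intra-regular if $a\in Sa^{2}S$ for every $a\in S$. For $a\in S$, $I(a)=\{a\}\cup Sa\cup aS\cup SaS$ and $\mathrm{IN}(a)=\{a\}\cup\{a^{2}\}\cup SaS$. $a\,\mathcal{J}\,b$ iff $I(a)=I(b)$, and $a\,\mathcal{I}\,b$ iff $\mathrm{IN}(a)=\mathrm{IN}(b)$. *)

Definition associative {S : Type} (mul : S -> S -> S) : Prop :=
  forall x y z, mul x (mul y z) = mul (mul x y) z.

Definition intra_regular {S : Type} (mul : S -> S -> S) : Prop :=
  forall a : S, exists x y : S, a = mul (mul x (mul a a)) y.

Definition I_ideal {S : Type} (mul : S -> S -> S) (a : S) (z : S) : Prop :=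
  z = a
  \/ (exists s, z = mul s a)
  \/ (exists s, z = mul a s)
  \/ (exists s t, z = mul (mul s a) t).

Definition IN_ideal {S : Type} (mul : S -> S -> S) (a : S) (z : S) : Prop :=
  z = a
  \/ z = mul a a
  \/ (exists s t, z = mul (mul s a) t).

Definition J_rel {S : Type} (mul : S -> S -> S) (a b : S) : Prop :=
  forall z, I_ideal mul a z <-> I_ideal mul b z.

Definition I_rel {S : Type} (mul : S -> S -> S) (a b : S) : Prop :=
  forall z, IN_ideal mul a z <-> IN_ideal mul b z.

(* In an intra-regular semigroup every a lies in SaS, and SaS is closed under
   multiplication on either side, so SaS already absorbs a, Sa, aS and a^2.
   Hence I(a) = SaS = IN(a) for every a, and the two relations coincide. *)

From Stdlib Require Import Setoid.

Section PrincipalIdeals.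

Variables (S : Type) (mul : S -> S -> S).
Hypothesis mulA : associative mul.

Definition two_sided_ideal (a z : S) : Prop := exists s t, z = mul (mul s a) t.

Lemma two_sided_ideal_mull (a s z : S) :
  two_sided_ideal a z -> two_sided_ideal a (mul s z).
Proof.
  intros [u [v ->]]. exists (mul s u), v. rewrite !mulA. reflexivity.
Qed.

Lemma two_sided_ideal_mulr (a s z : S) :
  two_sided_ideal a z -> two_sided_ideal a (mul z s).
Proof.
  intros [u [v ->]]. exists u, (mul v s). rewrite !mulA. reflexivity.
Qed.

Lemma intra_regular_self_ideal :
  intra_regular mul -> forall a : S, two_sided_ideal a a.
Proof.
  intros Hir a. destruct (Hir a) as [x [y Ha]].
  exists (mul x a), y. rewrite <- (mulA x a a). exact Ha.
Qed.

Lemma I_ideal_two_sided (a : S) :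
  two_sided_ideal a a -> forall z, I_ideal mul a z <-> two_sided_ideal a z.
Proof.
  intros Ha z. split.
  - intros [-> | [[s ->] | [[s ->] | Hz]]].
    + exact Ha.
    + exact (two_sided_ideal_mull a s a Ha).
    + exact (two_sided_ideal_mulr a s a Ha).
    + exact Hz.
  - intros Hz. right; right; right. exact Hz.
Qed.

Lemma IN_ideal_two_sided (a : S) :
  two_sided_ideal a a -> forall z, IN_ideal mul a z <-> two_sided_ideal a z.
Proof.
  intros Ha z. split.
  - intros [-> | [-> | Hz]].
    + exact Ha.
    + exact (two_sided_ideal_mulr a a a Ha).
    + exact Hz.
  - intros Hz. right; right. exact Hz.
Qed.

Lemma intra_regular_I_ideal_IN_ideal :
  intra_regular mul -> forall a z : S, I_ideal mul a z <-> IN_ideal mul a z.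
Proof.
  intros Hir a z. pose proof (intra_regular_self_ideal Hir a) as Ha.
  rewrite (I_ideal_two_sided a Ha z), (IN_ideal_two_sided a Ha z). reflexivity.
Qed.

End PrincipalIdeals.

Theorem mainTheorem19 (S : Type) (mul : S -> S -> S)
  (Hassoc : associative mul) (Hir : intra_regular mul) :
  forall a b : S, J_rel mul a b <-> I_rel mul a b.
Proof.
  intros a b. unfold J_rel, I_rel.
  setoid_rewrite (intra_regular_I_ideal_IN_ideal S mul Hassoc Hir).
  reflexivity.
Qed.
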